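(* Let $n\ge 2$, let $X_2,\ldots,X_n$ be independent and uniformly distributed on $\{0,1\}$, and let $X_1=1-\prod_{i=2}^n X_i$. Then (a) $X_1,\ldots,X_n$ satisfy negative regression; and (b) for $f(X)=\sum_{i=1}^n X_i$ and $Y_k=\mathbb{E}[f(X)\mid X_1,\ldots,X_k]$, we have $Y_0=\frac{n+1}{2}-\frac{1}{2^{n-1}}$, and on the event $\{X_1=0\}$, which has probability $2^{-(n-1)}$, $Y_1=n-1$; in particular $Y_1-Y_0=\frac{n-3}{2}+\frac{1}{2^{n-1}}$ on this event.
   Context: For $S\subseteq[n]$, $X_S\in\{0,1\}^S$ denotes the tuple $(X_i)_{i\in S}$. The variables $X_1,\ldots,X_n$ satisfy negative regression if for all disjoint $I,J\subseteq[n]$, every non-decreasing function $g:\{0,1\}^I\to\mathbb{R}$, and all $a\le b$ in $\{0,1\}^J$ (coordinatewise) such that $\Pr[X_J=a]>0$ and $\Pr[X_J=b]>0$, we have $\mathbb{E}[g(X_I)\mid X_J=a]\ge \mathbb{E}[g(X_I)\mid X_J=b]$. *)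

From HB Require Import structures.
From mathcomp Require Import all_boot all_order all_algebra.
Set Implicit Arguments. Unset Strict Implicit. Unset Printing Implicit Defensive.
Import Order.TTheory GRing.Theory Num.Theory.
Local Open Scope ring_scope.

Definition idx (n : nat) (S : {set 'I_n}) := {i : 'I_n | i \in S}.

Definition restr (n : nat) (S : {set 'I_n}) (x : 'I_n -> bool)
  : {ffun idx S -> bool} := [ffun i => x (val i)].

Definition bleq (T : finType) (a b : {ffun T -> bool}) : bool :=
  [forall i, a i ==> b i].

(* Random vector Xv : Ω -> {0,1}^n on a finite sample space Ω with the
   uniform probability measure. *)
Definition event (Om : finType) (n : nat) (Xv : Om -> 'I_n -> bool)
  (J : {set 'I_n}) (a : {ffun idx J -> bool}) : {set Om} :=
  [set w | restr J (Xv w) == a].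

Definition Pr (R : realFieldType) (Om : finType) (A : {set Om}) : R :=
  #|A|%:R / #|Om|%:R.

Definition cond_exp (R : realFieldType) (Om : finType) (n : nat)
  (Xv : Om -> 'I_n -> bool) (h : ('I_n -> bool) -> R) (A : {set Om}) : R :=
  (\sum_(w in A) h (Xv w)) / #|A|%:R.

Definition neg_regression (R : realFieldType) (Om : finType) (n : nat)
  (Xv : Om -> 'I_n -> bool) : Prop :=
  forall (I J : {set 'I_n}), [disjoint I & J] ->
  forall g : {ffun idx I -> bool} -> R,
    (forall x y, bleq x y -> g x <= g y) ->
  forall a b : {ffun idx J -> bool}, bleq a b ->
    0 < Pr R (event Xv a) -> 0 < Pr R (event Xv b) ->
    cond_exp Xv (fun x => g (restr I x)) (event Xv b)
      <= cond_exp Xv (fun x => g (restr I x)) (event Xv a).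

Definition fsum (R : realFieldType) (n : nat) (x : 'I_n -> bool) : R :=
  \sum_(i < n) (x i)%:R.

(* Y_k(w) = E[f(X) | X_1,...,X_k] evaluated at outcome w;
   index i : 'I_n (0-based) corresponds to X_{i+1}. *)
Definition firstk (n k : nat) : {set 'I_n} := [set i : 'I_n | (i < k)%N].

Definition Ymart (R : realFieldType) (Om : finType) (n : nat)
  (Xv : Om -> 'I_n -> bool) (k : nat) (w : Om) : R :=
  cond_exp Xv (@fsum R n) (event Xv (restr (firstk n k) (Xv w))).

(* Sample space: {0,1}^n with uniform measure; the
   coordinates 1..n-1 (0-based) are the independent fair bits X_2..X_n;
   coordinate 0 of the sample point is an unused extra fair coin. *)
Definition Omega (n : nat) := {ffun 'I_n -> bool}.

Definition Xex (n : nat) (w : Omega n) (i : 'I_n) : bool :=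
  if nat_of_ord i == 0%N then ~~ [forall j : 'I_n, (0 < j)%N ==> w j]
  else w i.

From HB Require Import structures.
From mathcomp Require Import all_boot all_order all_algebra.
From mathcomp Require Import ring.
Import Order.TTheory GRing.Theory Num.Theory.
Set Implicit Arguments. Unset Strict Implicit. Unset Printing Implicit Defensive.
Local Open Scope ring_scope.

(* X_1 = 0 exactly when X_2 = ... = X_n = 1, which happens on 2 of the 2^n
   sample points; part (b) is a direct count.
   For negative regression, toggle the bits on which a and b differ.  When
   X_1 is not conditioned to be 0, this maps {X_J = b} injectively into
   {X_J = a} without decreasing X_I: only the X_1-coordinate of X_I can move,
   and it goes up because a bit is switched off.  The points of {X_J = a}
   it misses have X_2 = ... = X_n = 1, hence X_I maximal, so they can only
   raise the average.  When X_1 is conditioned to be 0 on the a side, X_I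
   is identically maximal on {X_J = a}. *)

Section Mean.
Variables (R : realFieldType) (T : finType).
Implicit Types (h : T -> R) (A B : {set T}).

Definition mean h A : R := (\sum_(w in A) h w) / #|A|%:R.

Lemma mean_sum h A : (0 < #|A|)%N -> mean h A * #|A|%:R = \sum_(w in A) h w.
Proof. by move=> A0; rewrite /mean mulfVK // pnatr_eq0 -lt0n. Qed.

Lemma mean_le_ub h A M :
  (0 < #|A|)%N -> (forall w, w \in A -> h w <= M) -> mean h A <= M.
Proof.
move=> A0 hM; rewrite /mean ler_pdivrMr ?ltr0n // mulr_natr -sumr_const.
exact: ler_sum.
Qed.

Lemma mean_ge_lb h A M :
  (0 < #|A|)%N -> (forall w, w \in A -> M <= h w) -> M <= mean h A.
Proof.
move=> A0 hM; rewrite /mean ler_pdivlMr ?ltr0n // mulr_natr -sumr_const.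
exact: ler_sum.
Qed.

Lemma ler_mean_inj h A B (phi : T -> T) :
  injective phi -> (0 < #|B|)%N ->
  (forall w, w \in B -> phi w \in A) ->
  (forall w, w \in B -> h w <= h (phi w)) ->
  (forall v w, v \in A :\: phi @: B -> w \in B -> h w <= h v) ->
  mean h B <= mean h A.
Proof.
move=> phi_inj B0 phiBA h_phi h_miss.
set C := A :\: phi @: B.
have phiB_sub : phi @: B \subset A.
  by apply/subsetP=> _ /imsetP [w wB ->]; exact: phiBA.
have cardA : #|A| = (#|B| + #|C|)%N.
  by rewrite -(cardsID (phi @: B) A) (setIidPr phiB_sub) card_imset.
have sumA : \sum_(w in A) h w = \sum_(w in B) h (phi w) + \sum_(w in C) h w.
  by rewrite (big_setID (phi @: B)) /= (setIidPr phiB_sub) big_imset // => x y _ _ /phi_inj.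
have sumB : \sum_(w in B) h w <= \sum_(w in B) h (phi w) by exact: ler_sum.
have sumC : mean h B *+ #|C| <= \sum_(w in C) h w.
  rewrite -sumr_const; apply: ler_sum => v vC.
  by apply: mean_le_ub => // w; exact: h_miss.
rewrite [mean h A]/mean ler_pdivlMr ?ltr0n ?cardA ?addn_gt0 ?B0 //.
by rewrite natrD mulrDr mean_sum // sumA mulr_natr lerD.
Qed.

End Mean.

Lemma Pr_gt0 (R : realFieldType) (T : finType) (A : {set T}) :
  0 < Pr R A -> (0 < #|A|)%N.
Proof. by rewrite /Pr lt0n; case: #|A| => //; rewrite mul0r ltxx. Qed.

Lemma eventP (T : finType) n (Xv : T -> 'I_n -> bool) (J : {set 'I_n})
    (c : {ffun idx J -> bool}) (w : T) :
  reflect (forall s, Xv w (val s) = c s) (w \in event Xv c).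
Proof.
rewrite inE; apply: (iffP eqP) => [<- s | Xc]; first by rewrite ffunE.
by apply/ffunP=> s; rewrite ffunE Xc.
Qed.

Definition tail_ones n (w : Omega n) : bool := [forall j : 'I_n, (0 < j)%N ==> w j].

Lemma Xex0 n (w : Omega n.+1) : Xex w ord0 = ~~ tail_ones w.
Proof. by []. Qed.

Lemma Xex_neq0 n (w : Omega n.+1) (i : 'I_n.+1) : i != ord0 -> Xex w i = w i.
Proof. by move=> i0; rewrite /Xex ifF //; apply/negbTE. Qed.

Lemma tail_onesP n (w : Omega n.+1) :
  reflect (forall j, j != ord0 -> w j) (tail_ones w).
Proof.
apply: (iffP forallP) => [tw j j0 | tw j]; last by apply/implyP; rewrite lt0n => /tw.
by have /implyP := tw j; apply; rewrite lt0n.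
Qed.

Definition flip n (D : pred 'I_n) (w : Omega n) : Omega n := [ffun k => w k (+) D k].

Lemma flipK n (D : pred 'I_n) : involutive (flip D).
Proof. by move=> w; apply/ffunP=> k; rewrite !ffunE addbK. Qed.

Definition differ n (J : {set 'I_n}) (a b : {ffun idx J -> bool}) : pred 'I_n :=
  fun k => if insub k is Some s then a s != b s else false.

Lemma differ_val n (J : {set 'I_n}) (a b : {ffun idx J -> bool}) (s : idx J) :
  differ a b (val s) = (a s != b s).
Proof. by rewrite /differ valK. Qed.

Lemma differ_notin n (J : {set 'I_n}) (a b : {ffun idx J -> bool}) (k : 'I_n) :
  k \notin J -> differ a b k = false.
Proof. by move=> kJ; rewrite /differ insubN. Qed.

Section NegativeRegression.
Variables (R : realFieldType) (m : nat).
Local Notation n := m.+1.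
Variables (I J : {set 'I_n}) (g : {ffun idx I -> bool} -> R) (a b : {ffun idx J -> bool}).
Hypotheses (IJ : [disjoint I & J]) (g_mono : forall x y, bleq x y -> g x <= g y)
  (ab : bleq a b).

Let h (w : Omega n) : R := g (restr I (Xex w)).
Let A := event (@Xex n) a.
Let B := event (@Xex n) b.
Let phi := flip (differ a b).

Lemma h_le_top w : h w <= g [ffun => true].
Proof. by apply: g_mono; apply/forallP=> i; rewrite ffunE implybT. Qed.

Lemma h_top v : (forall i, i \in I -> Xex v i) -> h v = g [ffun => true].
Proof. by move=> vI; congr g; apply/ffunP=> i; rewrite !ffunE vI // (valP i). Qed.

Lemma notin_J_of_I i : i \in I -> i \notin J.
Proof. by move=> iI; rewrite (disjointFr IJ iI). Qed.

Lemma neq0_of_I i : ord0 \in J -> i \in I -> i != ord0.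
Proof. by move=> J0 iI; apply: contraTneq (notin_J_of_I iI) => ->; rewrite negbK. Qed.

Lemma Xex_phi_I w i : i \in I -> i != ord0 -> Xex (phi w) i = Xex w i.
Proof.
by move=> iI i0; rewrite !Xex_neq0 // ffunE differ_notin ?addbF ?notin_J_of_I.
Qed.

Lemma Xex_phi_J w s : val s != ord0 -> Xex (phi w) (val s) = Xex w (val s) (+) (a s != b s).
Proof. by move=> s0; rewrite !Xex_neq0 // ffunE differ_val. Qed.

Lemma Xex_phi_B w s : w \in B -> val s != ord0 -> Xex (phi w) (val s) = a s.
Proof. by move=> /eventP wB s0; rewrite Xex_phi_J // wB; case: (a s) (b s) => [] []. Qed.

Lemma Xex_phi_A w s : w \in A -> val s != ord0 -> Xex (phi w) (val s) = b s.
Proof. by move=> /eventP wA s0; rewrite Xex_phi_J // wA; case: (a s) (b s) => [] []. Qed.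

Lemma ler_mean_events_X1_eq0 s0 : val s0 = ord0 -> a s0 = false ->
  (0 < #|A|)%N -> (0 < #|B|)%N -> mean h B <= mean h A.
Proof.
move=> s00 as0 A0 B0.
have top_on_A v : v \in A -> h v = g [ffun => true].
  move=> /eventP vA; have /tail_onesP tv : tail_ones v.
    by rewrite -[tail_ones v]negbK -Xex0 -s00 vA as0.
  apply: h_top => i iI.
  by rewrite Xex_neq0 ?tv // neq0_of_I // -s00 (valP s0).
apply: (@le_trans _ _ (g [ffun => true])); first exact: mean_le_ub (fun w _ => h_le_top w).
by apply: mean_ge_lb => // v /top_on_A ->.
Qed.

Lemma ler_mean_events_flip : (forall s, val s = ord0 -> a s) -> a != b ->
  (0 < #|B|)%N -> mean h B <= mean h A.
Proof.
move=> a0 neab B0.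
have [j0 aj0 bj0] : exists2 j0, a j0 = false & b j0 = true.
  have /existsP [j0 neq] : [exists j, a j != b j].
    by apply: contraNT neab => /existsPn eqab; apply/eqP/ffunP=> j; apply/eqP/negPn.
  by exists j0; move: (forallP ab j0) neq; case: (a j0) (b j0) => [] [].
have j00 : val j0 != ord0 by apply: contraFneq aj0 => /a0.
have tail_phi w : w \in B -> tail_ones (phi w) = false.
  move=> wB; apply: contraTF isT => /tail_onesP/(_ _ j00).
  by rewrite -Xex_neq0 // Xex_phi_B // aj0.
have phiB_in_A w : w \in B -> phi w \in A.
  move=> wB; apply/eventP => s; case: (eqVneq (val s) ord0) => [s0 | s0].
    by rewrite s0 Xex0 tail_phi // a0.
  exact: Xex_phi_B.
have phiA_in_B v : v \in A -> (ord0 \notin J) || ~~ tail_ones (phi v) -> phi v \in B.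
  move=> vA J0; apply/eventP => s; case: (eqVneq (val s) ord0) => [s0 | s0].
    move: J0; rewrite -s0 (valP s) s0 Xex0 /= => ->.
    by have := forallP ab s; rewrite a0 // implyTb.
  exact: Xex_phi_A.
apply: (ler_mean_inj (can_inj (flipK _)) B0 phiB_in_A).
  move=> w wB; apply: g_mono; apply/forallP=> i; rewrite !ffunE.
  case: (eqVneq (val i) ord0) => [-> | i0]; first by rewrite !Xex0 tail_phi // implybT.
  by rewrite Xex_phi_I ?implybb ?(valP i).
move=> v w /setDP [vA vB] _.
have /andP [J0 tv] : (ord0 \in J) && tail_ones (phi v).
  apply: contraNT vB; rewrite negb_and => /(phiA_in_B _ vA) phivB.
  by rewrite -[v](flipK (differ a b)); apply: imset_f.
rewrite [h v]h_top => [|i iI]; first exact: h_le_top.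
have i0 := neq0_of_I J0 iI.
by rewrite -Xex_phi_I // Xex_neq0 ?(tail_onesP _ tv).
Qed.

End NegativeRegression.

Lemma Xex_neg_regression (R : realFieldType) m : neg_regression R (@Xex m.+1).
Proof.
move=> I J IJ g g_mono a b ab /Pr_gt0 A0 /Pr_gt0 B0.
case: (eqVneq a b) => [-> | neab]; first exact: lexx.
case/boolP: [forall s : idx J, (val s == ord0) ==> a s] => [/forallP a0 | /forallPn [s0]].
  by apply: ler_mean_events_flip => // s /eqP s0; exact: implyP (a0 s) s0.
rewrite negb_imply => /andP [/eqP s00 /negbTE as0].
exact: ler_mean_events_X1_eq0 s00 as0 A0 B0.
Qed.

Lemma card_Omega n : #|Omega n| = (2 ^ n)%N.
Proof. by rewrite card_ffun card_bool card_ord. Qed.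

Lemma card_tail_ones m : #|[set w : Omega m.+1 | tail_ones w]| = 2%N.
Proof.
pose tail c : Omega m.+1 := [ffun k => c || (k != ord0)].
have -> : [set w | tail_ones w] = [set tail c | c : bool].
  apply/setP=> w; rewrite inE; apply/idP/imsetP => [/tail_onesP tw | [c _ ->]].
    exists (w ord0) => //; apply/ffunP=> k; rewrite ffunE.
    by case: (eqVneq k ord0) => [-> | /tw ->] /=; rewrite ?orbF ?orbT.
  by apply/tail_onesP => j j0; rewrite ffunE j0 orbT.
rewrite card_imset ?card_bool // => c c' /(congr1 (fun w : Omega m.+1 => w ord0)).
by rewrite !ffunE !orbF.
Qed.

Lemma card_coord n (i : 'I_n) : #|[set w : Omega n | w i]| = (2 ^ n.-1)%N.
Proof.
set S := [set w : Omega n | w i].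
have flipS : flip (pred1 i) @: S = ~: S.
  apply/setP=> w; rewrite !inE; apply/imsetP/idP => [[v] | wS].
    by rewrite inE => vS ->; rewrite ffunE /= eqxx vS.
  by exists (flip (pred1 i) w); rewrite ?flipK // inE ffunE /= eqxx addbT.
have := cardsC S; rewrite -flipS card_imset ?card_Omega => [cardS|];
  last exact: can_inj (flipK _).
apply/eqP; rewrite -(eqn_pmul2l (isT : (0 < 2)%N)) mul2n -addnn cardS -expnS prednK //.
exact: leq_ltn_trans (leq0n i) (ltn_ord i).
Qed.

Lemma sumr_indicator (R : realFieldType) (T : finType) (P : pred T) :
  \sum_w ((P w)%:R : R) = #|[set w | P w]|%:R.
Proof.
rewrite (bigID P) /= [X in _ + X]big1 ?addr0 => [|w /negbTE -> //].
rewrite (eq_bigr (fun _ => 1)) => [|w -> //].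
by rewrite -sumr_const; apply: eq_bigl => w; rewrite inE.
Qed.

Lemma sum_fsum_Xex (R : realFieldType) m :
  \sum_(w : Omega m.+1) fsum R (Xex w) = 2 ^+ m.+1 - 2 + m%:R * 2 ^+ m.
Proof.
rewrite exchange_big /= big_ord_recl sumr_indicator.
have -> : [set w : Omega m.+1 | Xex w ord0] = ~: [set w | tail_ones w].
  by apply/setP=> w; rewrite !inE Xex0.
have -> : (#|~: [set w : Omega m.+1 | tail_ones w]|%:R : R) = 2 ^+ m.+1 - 2.
  rewrite -natrX -card_Omega -(cardsC [set w | tail_ones w]).
  by rewrite natrD card_tail_ones addrC addKr.
congr (_ + _); rewrite (eq_bigr (fun _ => 2 ^+ m)) => [|j _].
  by rewrite sumr_const card_ord mulr_natl.
rewrite sumr_indicator.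
have -> : [set w : Omega m.+1 | Xex w (lift ord0 j)] = [set w : Omega m.+1 | w (lift ord0 j)].
  by apply/setP=> w; rewrite !inE Xex_neq0.
by rewrite card_coord natrX.
Qed.

Lemma event_firstk0 (T : finType) n (Xv : T -> 'I_n -> bool) (x : 'I_n -> bool) :
  event Xv (restr (firstk n 0) x) = setT.
Proof.
by apply/setP=> w; rewrite !inE; apply/eqP/ffunP => s; have := valP s; rewrite inE.
Qed.

Lemma event_firstk1 (T : finType) n (Xv : T -> 'I_n.+1 -> bool) (w : T) :
  event Xv (restr (firstk n.+1 1) (Xv w)) = [set v | Xv v ord0 == Xv w ord0].
Proof.
have s0P (s : idx (firstk n.+1 1)) : val s = ord0.
  by apply: val_inj; have := valP s; rewrite /firstk inE ltnS leqn0 => /eqP.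
apply/setP=> v; rewrite !inE; apply/eqP/eqP => [e | e].
  have ord0J : (ord0 : 'I_n.+1) \in firstk n.+1 1 by rewrite inE.
  by move/ffunP: e => /(_ (exist _ ord0 ord0J)); rewrite !ffunE.
by apply/ffunP => s; rewrite !ffunE s0P.
Qed.

Lemma Ymart0_Xex (R : realFieldType) m (w : Omega m.+1) :
  Ymart R (@Xex m.+1) 0 w = m.+2%:R / 2 - 1 / 2 ^+ m.
Proof.
rewrite /Ymart /cond_exp event_firstk0 cardsT card_Omega.
rewrite (eq_bigl xpredT) => [|v]; last by rewrite inE.
have h2 : (2 ^+ m : R) != 0 by rewrite expf_neq0 // pnatr_eq0.
rewrite sum_fsum_Xex natrX !exprS -[m.+2%:R]natr1 -[m.+1%:R]natr1.
by field.
Qed.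

Lemma Pr_Xex0_false (R : realFieldType) m :
  Pr R [set w : Omega m.+1 | ~~ Xex w ord0] = 1 / 2 ^+ m.
Proof.
have -> : [set w : Omega m.+1 | ~~ Xex w ord0] = [set w | tail_ones w].
  by apply/setP=> v; rewrite !inE Xex0 negbK.
have h2 : (2 ^+ m : R) != 0 by rewrite expf_neq0 // pnatr_eq0.
rewrite /Pr card_tail_ones card_Omega natrX exprS.
by field.
Qed.

Lemma Ymart1_Xex (R : realFieldType) m (w : Omega m.+1) :
  Xex w ord0 = false -> Ymart R (@Xex m.+1) 1 w = m%:R.
Proof.
move=> w0; rewrite /Ymart /cond_exp event_firstk1 w0.
have -> : [set v : Omega m.+1 | Xex v ord0 == false] = [set v | tail_ones v].
  by apply/setP=> v; rewrite !inE Xex0 eqbF_neg negbK.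
rewrite (eq_bigr (fun _ => m%:R)) => [|v]; last first.
  rewrite inE => tv; rewrite /fsum big_ord_recl Xex0 tv /= add0r.
  rewrite (eq_bigr (fun _ => 1)) => [|j _]; first by rewrite sumr_const card_ord.
  by rewrite Xex_neq0 // (tail_onesP _ tv).
by rewrite sumr_const card_tail_ones -[_ *+ 2]mulr_natr mulfK // pnatr_eq0.
Qed.

Theorem mainTheorem5 (R : realFieldType) (n : nat) (hn : (2 <= n)%N) :
  neg_regression R (@Xex n) /\
  (forall w : Omega n,
     Ymart R (@Xex n) 0 w = (n.+1)%:R / 2 - 1 / 2 ^+ n.-1) /\
  (forall i0 : 'I_n, nat_of_ord i0 = 0%N ->
     Pr R [set w : Omega n | ~~ Xex w i0] = 1 / 2 ^+ n.-1 /\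
     (forall w : Omega n, Xex w i0 = false ->
        Ymart R (@Xex n) 1 w = (n.-1)%:R /\
        Ymart R (@Xex n) 1 w - Ymart R (@Xex n) 0 w
          = (n%:R - 3) / 2 + 1 / 2 ^+ n.-1)).
Proof.
case: n hn => [|m] // _.
split; first exact: Xex_neg_regression.
split; first exact: Ymart0_Xex.
move=> i0 /(@ord_inj m.+1 _ ord0) ->; split; first exact: Pr_Xex0_false.
move=> w w0; rewrite Ymart1_Xex // Ymart0_Xex; split => //=.
have h2 : (2 ^+ m : R) != 0 by rewrite expf_neq0 // pnatr_eq0.
rewrite -[m.+2%:R]natr1 -[m.+1%:R]natr1.
by field.
Qed.
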